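(* Let $C\subseteq\mathbb{F}_q^n$ be a linear code of dimension $k\geqslant1$ and minimum distance $d$, and let $\mathbb{K}$ be a field. Suppose that the minimal $\mathbb{N}$-graded free resolution of the Stanley-Reisner ring $R(C)$ of its associated matroid starts as \[ 0\leftarrow R(C)\leftarrow S\leftarrow S(-d)^{{k\brack 1}_q}\leftarrow\cdots, \] i.e. the first free module is $S(-d)^{{k\brack 1}_q}$ with ${k\brack 1}_q=\frac{q^k-1}{q-1}$. Then $C$ is a constant weight code of weight $d$.
   Context: The minimum distance $d$ is the least number of non-zero coordinates of a non-zero codeword. A constant weight code is a linear code all of whose non-zero codewords have the same number of non-zero coordinates. Let $H_C$ be a parity check matrix of $C$ ($c\in C$ iff $cH_C^t=0$); the associated matroid $\Delta$ on $\{1,\dots,n\}$ has as independent sets the index sets of linearly independent columns of $H_C$, regarded as a simplicial complex. With $S=\mathbb{K}[x_1,\dots,x_n]$, $I_\Delta=\langle\prod_{e\in\sigma}x_e:\sigma\notin\Delta\rangle$ and $R(C)=S/I_\Delta$. $S(-j)$ is the rank one free module generated in degree $j$. *)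

From HB Require Import structures.
From mathcomp Require Import all_boot all_order all_algebra all_field.
From mathcomp Require Import mpoly.
Set Implicit Arguments. Unset Strict Implicit. Unset Printing Implicit Defensive.
Import GRing.Theory.
Local Open Scope ring_scope.

Definition wt (F : fieldType) (n : nat) (c : 'rV[F]_n) : nat :=
  #|[set i : 'I_n | c 0 i != 0]|.

Definition is_min_distance (F : fieldType) (n : nat) (C : {vspace 'rV[F]_n}) (d : nat) :=
  (exists2 c, c \in C & c != 0 /\ wt c = d) /\
  (forall c, c \in C -> c != 0 -> (d <= wt c)%N).

Definition constant_weight (F : fieldType) (n : nat) (C : {vspace 'rV[F]_n}) (d : nat) :=
  forall c, c \in C -> c != 0 -> wt c = d.

Definition parity_check (F : fieldType) (n r : nat) (C : {vspace 'rV[F]_n})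
  (H : 'M[F]_(r, n)) := forall c : 'rV[F]_n, (c \in C) <-> (c *m H^T = 0).

Definition cols_of (F : fieldType) (n r : nat) (H : 'M[F]_(r, n)) (s : {set 'I_n}) :
  'M[F]_(#|s|, r) := \matrix_(i < #|s|, j < r) H j (enum_val i).

(* independent sets of the matroid of H: sets of linearly independent columns *)
Definition indep (F : fieldType) (n r : nat) (H : 'M[F]_(r, n)) (s : {set 'I_n}) : bool :=
  row_free (cols_of H s).

Definition xmono (K : fieldType) (n : nat) (s : {set 'I_n}) : {mpoly K[n]} :=
  \prod_(e in s) 'X_e.

Definition in_SR_ideal (K : fieldType) (F : fieldType) (n r : nat) (H : 'M[F]_(r, n))
  (p : {mpoly K[n]}) : Prop :=
  exists a : {set 'I_n} -> {mpoly K[n]},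
    p = \sum_(s : {set 'I_n} | ~~ indep H s) a s * xmono K s.

Definition generates_SR (K : fieldType) (F : fieldType) (n r : nat) (H : 'M[F]_(r, n))
  (N : nat) (g : 'I_N -> {mpoly K[n]}) : Prop :=
  forall p : {mpoly K[n]},
    in_SR_ideal H p <-> exists a : 'I_N -> {mpoly K[n]}, p = \sum_(i < N) a i * g i.

(* The minimal graded free resolution of R(C) = S/I_Delta starts
   0 <- R(C) <- S <- S(-d)^N <- ... : i.e. I_Delta has a minimal homogeneous
   system of generators consisting of N forms of degree d (minimal = no
   homogeneous generating family of smaller size). *)
Definition first_syzygy_module_is (K : fieldType) (F : fieldType) (n r : nat)
  (H : 'M[F]_(r, n)) (d N : nat) : Prop :=
  exists g : 'I_N -> {mpoly K[n]},
    [/\ forall i, g i \is d.-homog,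
        generates_SR H g &
        forall (M : nat) (g' : 'I_M -> {mpoly K[n]}),
          (forall i, exists e, g' i \is e.-homog) -> generates_SR H g' -> (N <= M)%N].

Definition gauss1 (q k : nat) : nat := ((q ^ k - 1) %/ (q - 1))%N.

From HB Require Import structures.
From mathcomp Require Import all_boot all_order all_algebra all_field.
From mathcomp Require Import mpoly.
From mathcomp Require Import zify.

(* A set of columns of H is dependent iff it contains the support of a nonzero
   codeword, so the monomials x^u, u the support of a codeword of minimal
   support (a circuit), generate I_Delta.  Let c be a nonzero codeword of
   weight > d.  If c has minimal support, x^(supp c) lies in the ideal spanned
   by degree-d generators, so some monomial of a generator divides it; that
   monomial contains a dependent set of size <= d inside supp c, which carries
   a codeword of strictly smaller support.  Otherwise the nonzero multiples of
   c, 0 and the q - 1 nonzero multiples of one minimal codeword per circuit are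
   distinct codewords, so there are fewer than (q^k - 1)/(q - 1) circuits,
   contradicting the minimality of the number of generators. *)
Set Implicit Arguments. Unset Strict Implicit. Unset Printing Implicit Defensive.
Import GRing.Theory.
Local Open Scope ring_scope.

Definition supp (F : fieldType) (n : nat) (c : 'rV[F]_n) : {set 'I_n} :=
  [set i | c 0 i != 0].

Lemma suppZ (F : fieldType) (n : nat) (a : F) (c : 'rV[F]_n) :
  a != 0 -> supp (a *: c) = supp c.
Proof. by move=> a0; apply/setP => i; rewrite !inE mxE mulf_eq0 negb_or a0. Qed.

Section ParityCheck.

Variables (F : fieldType) (n r : nat) (C : {vspace 'rV[F]_n}) (H : 'M[F]_(r, n)).

Definition row_restr (s : {set 'I_n}) (c : 'rV[F]_n) : 'rV[F]_#|s| :=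
  \row_i c 0 (enum_val i).

Definition row_extend (s : {set 'I_n}) (v : 'rV[F]_#|s|) : 'rV[F]_n :=
  \row_e \sum_i v 0 i * (enum_val i == e)%:R.

Lemma row_extendK (s : {set 'I_n}) : cancel (@row_extend s) (@row_restr s).
Proof.
move=> v; apply/rowP => i; rewrite !mxE (bigD1 i) //= eqxx mulr1 big1 ?addr0 //.
by move=> j ji; rewrite (inj_eq enum_val_inj) (negbTE ji) mulr0.
Qed.

Lemma supp_row_extend (s : {set 'I_n}) (v : 'rV[F]_#|s|) :
  supp (row_extend v) \subset s.
Proof.
apply/subsetP => e; rewrite inE mxE; apply: contraR => es.
rewrite big1 // => i _; case: (enum_val i =P e) => [ie|_]; last by rewrite mulr0.
by rewrite -ie enum_valP in es.
Qed.

Lemma row_restr_eq0 (s : {set 'I_n}) (c : 'rV[F]_n) :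
  supp c \subset s -> row_restr s c = 0 -> c = 0.
Proof.
move=> cs /rowP c0; apply/rowP => e; rewrite mxE; case: (boolP (e \in s)) => es.
  by have := c0 (enum_rank_in es e); rewrite !mxE enum_rankK_in.
by apply/eqP; apply: contraR es => ce; apply: (subsetP cs); rewrite inE.
Qed.

Lemma mul_tr_cols_of (s : {set 'I_n}) (c : 'rV[F]_n) :
  supp c \subset s -> c *m H^T = row_restr s c *m cols_of H s.
Proof.
move=> cs; apply/rowP => j; rewrite !mxE.
under eq_bigr do rewrite !mxE.
under [RHS]eq_bigr do rewrite !mxE.
rewrite (bigID (mem s)) /= [X in _ + X]big1 ?addr0 => [|e es].
  by rewrite -(big_enum_val (fun e => c 0 e * H j e)).
have /eqP -> : c 0 e == 0 by apply: contraR es => ce; apply: (subsetP cs); rewrite inE.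
by rewrite mul0r.
Qed.

Hypothesis hpc : parity_check C H.

Lemma dep_codewordP (s : {set 'I_n}) :
  ~~ indep H s <-> exists c, [/\ c \in C, c != 0 & supp c \subset s].
Proof.
split=> [|[c [cC c0 cs]]].
  rewrite /indep -kermx_eq0 => /matrix0Pn[i [j kij]].
  set v := row i (kermx (cols_of H s)).
  have v0 : v != 0 by apply/rV0Pn; exists j; rewrite mxE.
  exists (row_extend v); split; last exact: supp_row_extend.
  - apply/hpc; rewrite (mul_tr_cols_of (supp_row_extend v)) row_extendK.
    by rewrite /v -row_mul mulmx_ker row0.
  - apply: contraNneq v0 => v'0; apply/eqP/rowP => i'.
    by rewrite -(row_extendK v) v'0 !mxE.
apply: contra c0 => free; apply/eqP/(row_restr_eq0 cs)/eqP.
by rewrite -(mulmx_free_eq0 _ free) -mul_tr_cols_of //; apply/eqP/hpc.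
Qed.

End ParityCheck.

Section MinimalCodewords.

Variables (F : finFieldType) (n : nat) (C : {vspace 'rV[F]_n}).

Definition minimal_codeword (c : 'rV[F]_n) : bool :=
  [&& c \in C, c != 0 &
      [forall c' : 'rV[F]_n, ~~ [&& c' \in C, c' != 0 & supp c' \proper supp c]]].

Definition circuits : {set {set 'I_n}} :=
  [set supp x | x in [set x | minimal_codeword x]].

Lemma minimal_codeword_below (c : 'rV[F]_n) (s : {set 'I_n}) :
  c \in C -> c != 0 -> supp c \subset s ->
  exists2 x, minimal_codeword x & supp x \subset s.
Proof.
move=> cC c0 cs; pose P x := [&& x \in C, x != 0 & supp x \subset s].
have Pc : P c by rewrite /P cC c0 cs.
have [x /and3P[xC x0 xs] xmin] := arg_minnP (fun x => #|supp x|) Pc.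
exists x; rewrite // /minimal_codeword xC x0; apply/forallP => y.
apply/and3P => -[yC y0]; rewrite properEcard => /andP[yx].
by rewrite ltnNge xmin // /P yC y0 (subset_trans yx xs).
Qed.

Lemma minimal_codewordZ (a : F) (c : 'rV[F]_n) :
  a != 0 -> minimal_codeword (a *: c) = minimal_codeword c.
Proof.
move=> a0; rewrite /minimal_codeword suppZ // scaler_eq0 (negbTE a0) /=.
congr andb; apply/idP/idP => [/(memvZ a^-1)|]; last exact: memvZ.
by rewrite scalerA mulVf // scale1r.
Qed.

Lemma card_circuits_le :
  (#|circuits| * #|F|.-1 <= #|[set x | minimal_codeword x]|)%N.
Proof.
pose rep u := odflt 0 [pick x | minimal_codeword x & supp x == u].
have repP u : u \in circuits -> minimal_codeword (rep u) && (supp (rep u) == u).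
  case/imsetP => x; rewrite inE => xmin ->; rewrite /rep.
  by case: pickP => [y -> //|/(_ x)]; rewrite xmin eqxx.
pose D := setX circuits [set~ (0 : F)].
have rep_inj : {in D &, injective (fun p => p.2 *: rep p.1)}.
  move=> [u a] [u' a']; rewrite !inE /= => /andP[uC a0] /andP[u'C a'0] /= eq_aa'.
  have /andP[/and3P[_ rep0 _] /eqP repu] := repP u uC.
  have /andP[_ /eqP repu'] := repP u' u'C.
  have uu' : u = u' by rewrite -[u]repu -[u']repu' -(suppZ _ a0) eq_aa' suppZ.
  subst u'; congr (_, _); apply/eqP; move/eqP: eq_aa'.
  by rewrite -subr_eq0 -scalerBl scaler_eq0 (negbTE rep0) orbF subr_eq0.
rewrite -(cardsC1 (0 : F)) -cardsX -(card_in_imset rep_inj); apply: subset_leq_card.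
apply/subsetP => _ /imsetP[[u a] /setXP[uC a0] ->]; rewrite !inE in a0 *.
by rewrite minimal_codewordZ //; case/andP: (repP u uC).
Qed.

Lemma card_circuits_nonminimal (c : 'rV[F]_n) :
  c \in C -> c != 0 -> ~~ minimal_codeword c ->
  (#|circuits| * #|F|.-1 + #|F| <= #|C|)%N.
Proof.
move=> cC c0 cnm; set Min := [set x | minimal_codeword x].
pose E := [set a *: c | a in [set~ (0 : F)]].
have cardE : #|E| = #|F|.-1.
  rewrite card_in_imset ?cardsC1 // => a b _ _ /eqP.
  by rewrite -subr_eq0 -scalerBl scaler_eq0 (negbTE c0) orbF subr_eq0 => /eqP.
have disj_ME : [disjoint Min & E].
  apply/pred0P => y /=; apply/negbTE/andP => -[ymin /imsetP[a /[!inE] a0 ya]].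
  by move: ymin; rewrite ya inE minimal_codewordZ // (negbTE cnm).
have zero_notin : 0 \notin Min :|: E.
  rewrite !inE /minimal_codeword eqxx andbF /=; apply/imsetP => -[a /[!inE] a0].
  by move/esym/eqP; rewrite scaler_eq0 (negbTE c0) orbF (negbTE a0).
have sub : 0 |: (Min :|: E) \subset [set x | x \in C].
  apply/subsetP => y /[!inE] /orP[/eqP->|/orP[/and3P[]//|/imsetP[a _ ->]]].
    exact: mem0v.
  exact: memvZ.
have /eqP cardME : #|Min :|: E| == (#|Min| + #|E|)%N.
  by rewrite (leq_card_setU Min E).
have := subset_leq_card sub; rewrite cardsU1 zero_notin cardME cardE.
have -> : #|[set x | x \in C]| = #|C| by apply: eq_card => x; rewrite inE.
apply: leq_trans; rewrite -{2}(prednK (ltnW (card_finNzRing_gt1 F))) addnS add1n.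
by rewrite ltnS leq_add2r card_circuits_le.
Qed.

End MinimalCodewords.

Section StanleyReisner.

Variables (K F : fieldType) (n r : nat) (H : 'M[F]_(r, n)).

Definition mnm_of_set (s : {set 'I_n}) : 'X_{1..n} :=
  [multinom ((i \in s) : nat) | i < n].

Lemma mnm_of_setE (s : {set 'I_n}) (i : 'I_n) : mnm_of_set s i = (i \in s).
Proof. by rewrite mnmE. Qed.

Lemma xmonoE (s : {set 'I_n}) : xmono K s = 'X_[mnm_of_set s].
Proof.
rewrite mpolyXE_id /xmono big_mkcond /=; apply: eq_bigr => i _.
by rewrite mnm_of_setE; case: (i \in s); rewrite ?expr1 ?expr0.
Qed.

Lemma xmono_subset (s t : {set 'I_n}) :
  t \subset s -> xmono K s = xmono K t * xmono K (s :\: t).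
Proof. by move=> ts; rewrite /xmono (big_setID t) /= (setIidPr ts) mulrC. Qed.

Lemma in_SR_ideal_xmono (s : {set 'I_n}) : ~~ indep H s -> in_SR_ideal H (xmono K s).
Proof.
move=> dep; exists (fun t => (t == s)%:R).
rewrite (bigD1 s) //= eqxx mul1r big1 ?addr0 // => t /andP[_ /negbTE->].
by rewrite mul0r.
Qed.

Lemma generates_SR_mem (N : nat) (g : 'I_N -> {mpoly K[n]}) (i : 'I_N) :
  generates_SR H g -> in_SR_ideal H (g i).
Proof.
move=> gen; apply/gen; exists (fun j => (j == i)%:R).
by rewrite (bigD1 i) //= eqxx mul1r big1 ?addr0 // => j /negbTE->; rewrite mul0r.
Qed.

Lemma msupp_SR_ideal (p : {mpoly K[n]}) (m : 'X_{1..n}) :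
  in_SR_ideal H p -> m \in msupp p ->
  exists2 s, ~~ indep H s & forall e, e \in s -> (0 < m e)%N.
Proof.
case=> a -> /msupp_sum_le /flattenP[l /mapP[s]].
rewrite mem_filter => /andP[dep _] ->; rewrite xmonoE (perm_mem (msuppMX _ _)).
by case/mapP => m' _ ->; exists s => // e es; rewrite mnmDE mnm_of_setE es.

Qed.

Lemma generates_SR_xmono (T : {set {set 'I_n}}) :
  (forall t, t \in T -> ~~ indep H t) ->
  (forall s, ~~ indep H s -> exists2 t, t \in T & t \subset s) ->
  generates_SR H (fun i : 'I_#|T| => xmono K (enum_val i)).
Proof.
move=> T_dep dep_T p; split=> [[a ->]|[b ->]].
  pose t (s : {set 'I_n}) := odflt set0 [pick u in T | u \subset s].
  have tP s : ~~ indep H s -> (t s \in T) && (t s \subset s).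
    move=> /dep_T[u uT us]; rewrite /t.
    by case: pickP => [v /andP[-> ->] //|/(_ u)]; rewrite uT us.
  pose B u := \sum_(s | ~~ indep H s && (t s == u)) a s * xmono K (s :\: u).
  exists (fun i => B (enum_val i)); rewrite -(big_enum_val (fun u => B u * xmono K u)).
  rewrite (partition_big t (mem T)) => [|s /tP/andP[] //].
  apply: eq_bigr => u _; rewrite big_distrl; apply: eq_bigr => s /andP[dep /eqP <-].
  rewrite /= -mulrA; congr (_ * _); rewrite mulrC -xmono_subset //.
  by case/andP: (tP s dep).
exists (fun s => \sum_(i | enum_val i == s) b i).
rewrite (partition_big (@enum_val _ (mem T)) (fun s => ~~ indep H s)) => [|i _].
  by apply: eq_bigr => s _; rewrite big_distrl; apply: eq_bigr => i /eqP <-.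
exact/T_dep/enum_valP.
Qed.

Lemma small_dep_of_homog_generators (d N : nat) (g : 'I_N -> {mpoly K[n]})
    (s : {set 'I_n}) :
  (forall i, g i \is d.-homog) -> generates_SR H g -> ~~ indep H s ->
  exists2 t, ~~ indep H t & (t \subset s) && (#|t| <= d)%N.
Proof.
move=> g_homog gen dep; have [a xs] := (gen _).1 (in_SR_ideal_xmono dep).
have : mnm_of_set s \in msupp (xmono K s) by rewrite xmonoE msuppX mem_seq1.
rewrite xs => /msupp_sum_le /flattenP[_ /mapP[i _ ->]].
move=> /msuppM_le /allpairsP[[m1 m2] [/= _ m2g sm]].
have [t dep_t m2t] := msupp_SR_ideal (generates_SR_mem i gen) m2g.
exists t => //; apply/andP; split.
  apply/subsetP => e et; have := congr1 (fun m : 'X_{1..n} => m e) sm.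
  by rewrite /= mnm_of_setE mnmDE; case: (e \in s) => //=; have := m2t e et; lia.
have <- : mdeg m2 = d := dhomog_mf (g_homog i) m2g.
rewrite mdegE -sum1_card (@leq_trans (\sum_(e in t) m2 e)) ?leq_sum //.
by rewrite [X in (_ <= X)%N](bigID (mem t)) leq_addr.
Qed.

End StanleyReisner.

Section Circuits.

Variables (F : finFieldType) (n r : nat) (C : {vspace 'rV[F]_n}) (H : 'M[F]_(r, n)).
Hypothesis hpc : parity_check C H.

Lemma circuit_dep (u : {set 'I_n}) : u \in circuits C -> ~~ indep H u.
Proof.
case/imsetP => c /[!inE] /and3P[cC c0 _] ->.
by apply/(dep_codewordP hpc); exists c.
Qed.

Lemma dep_circuit (s : {set 'I_n}) :
  ~~ indep H s -> exists2 u, u \in circuits C & u \subset s.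
Proof.
move=> /(dep_codewordP hpc)[c [cC c0 cs]].
have [x xmin xs] := minimal_codeword_below cC c0 cs.
by exists (supp x); rewrite // imset_f ?inE.
Qed.

Lemma generates_SR_circuits (K : fieldType) :
  generates_SR H (fun i : 'I_#|circuits C| => xmono K (enum_val i)).
Proof. exact: generates_SR_xmono circuit_dep dep_circuit. Qed.

Lemma minimal_codeword_wt (K : fieldType) (d N : nat) (g : 'I_N -> {mpoly K[n]})
    (c : 'rV[F]_n) :
  (forall i, g i \is d.-homog) -> generates_SR H g -> minimal_codeword C c ->
  (wt c <= d)%N.
Proof.
move=> g_homog gen /and3P[cC c0 /forallP cmin].
have [|t dep_t /andP[ts td]] := small_dep_of_homog_generators g_homog gen (s := supp c).
  by apply/(dep_codewordP hpc); exists c.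
have /(dep_codewordP hpc)[c' [c'C c'0 c't]] := dep_t.
rewrite leqNgt; apply: contra (cmin c') => dlt; rewrite c'C c'0 properEcard.
rewrite (subset_trans c't ts) /=.
exact: leq_ltn_trans (subset_leq_card c't) (leq_ltn_trans td dlt).
Qed.

End Circuits.

Lemma ltn_gauss1 (q k m : nat) :
  (1 < q)%N -> (m * q.-1 + q <= q ^ k)%N -> (m < gauss1 q k)%N.
Proof.
move=> q_gt1; rewrite /gauss1 leq_divRL ?subn_gt0 // mulSn -subn1.
move: (m * (q - 1))%N (q ^ k)%N => mq qk; lia.
Qed.

Theorem proposition4 (F : finFieldType) (n k d r : nat) (C : {vspace 'rV[F]_n})
  (H : 'M[F]_(r, n)) (K : fieldType) :
  (1 <= k)%N -> \dim C = k -> is_min_distance C d -> parity_check C H ->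
  first_syzygy_module_is K H d (gauss1 #|F| k) ->
  constant_weight C d.
Proof.
move=> _ dimC [_ d_min] hpc [g [g_homog gen g_min]] c cC c0.
apply/eqP; rewrite eqn_leq d_min // andbT.
have [cmin|cnmin] := boolP (minimal_codeword C c).
  exact: (minimal_codeword_wt hpc g_homog gen cmin).
have gauss_le := g_min _ _ _ (generates_SR_circuits (K := K) hpc).
have := card_circuits_nonminimal cC c0 cnmin; rewrite card_vspace dimC.
move/(ltn_gauss1 (card_finNzRing_gt1 F)); rewrite ltnNge gauss_le //.
by move=> i; exists (mdeg (mnm_of_set (enum_val i))); rewrite xmonoE dhomogX.
Qed.
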